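(* Let $(\mathscr{P},\mathscr{B},\mathrm{I})$ be an incidence structure with incidence graph $\Gamma$, and let $\varphi$ be a gain function on $\Gamma$ with gain group $G$ acting on the left on a nonempty set $\Lambda$. Let $k\ge 1$ be an integer and $u_0,\dots,u_k\in\mathscr{P}\cup\mathscr{B}$. For $\lambda_0,\dots,\lambda_k\in\Lambda$, set $m_i=y_{u_i,\lambda_i}$ if $u_i\in\mathscr{B}$ and $m_i=z_{u_i,\lambda_i}$ if $u_i\in\mathscr{P}$. Then $(u_0,\dots,u_k)$ is a $k$-chain in $(\mathscr{P},\mathscr{B},\mathrm{I})$ if and only if $(m_0,\dots,m_k)$ is a $k$-chain in $\mathfrak{M}(\Gamma,\varphi)$ for some $\lambda_0,\dots,\lambda_k\in\Lambda$. Furthermore, whenever $(m_0,\dots,m_k)$ is such a $k$-chain in $\mathfrak{M}(\Gamma,\varphi)$, we have $\lambda_k=\varphi_w\cdot\lambda_0$, where $w=(u_0,e_1,u_1,\dots,u_{k-1},e_k,u_k)$ is the corresponding walk in $\Gamma$ ($e_i$ the edge joining $u_{i-1}$ and $u_i$).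
   Context: An incidence structure is a triple $(\mathscr{P},\mathscr{B},\mathrm{I})$ where $\mathscr{P}$ (points) and $\mathscr{B}$ (lines) are nonempty disjoint sets and $\mathrm{I}\subseteq\mathscr{P}\times\mathscr{B}$ is a nonempty incidence relation; write $p\ \mathrm{I}\ b$ when $(p,b)\in\mathrm{I}$. The incidence graph $\Gamma$ is the bipartite graph with vertex set $\mathscr{P}\cup\mathscr{B}$ and an edge $bp$ for each incident pair; every edge is oriented from its line to its point. A gain function with gain group $G$ assigns to each edge $e$ an element $\varphi(e)\in G$ (so $\varphi(e^{-1})=\varphi(e)^{-1}$). For a walk $w=(u_0,e_1,u_1,\dots,e_n,u_n)$, $\varphi_w=\varphi(e_n)^{\delta_n}\cdots\varphi(e_1)^{\delta_1}$ with $\delta_i=1$ if $e_i$ is oriented from $u_{i-1}$ to $u_i$ and $\delta_i=-1$ otherwise. Construction $\mathfrak{M}(\Gamma,\varphi)$: the incidence structure whose points are the formal symbols $x_p$ ($p\in\mathscr{P}$) and $y_{b,\lambda}$ ($b\in\mathscr{B},\lambda\in\Lambda$), whose lines are the formal symbols $z_{p,\lambda}$ ($p\in\mathscr{P},\lambda\in\Lambda$), and whose incidences are exactly: $x_p$ incident with $z_{p,\lambda}$ for all $\lambda$, and $y_{b,\lambda}$ incident with $z_{p,\mu}$ whenever $b\ \mathrm{I}\ p$ and $\mu=\varphi(bp)\cdot\lambda$. A $k$-chain in an incidence structure is a sequence $(u_0,\dots,u_k)$ of elements (points or lines) with $u_i$ incident with $u_{i-1}$ for all $1\le i\le k$. 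*)

From HB Require Import structures.
From mathcomp Require Import all_boot.
From mathcomp Require Export monoid.
Set Implicit Arguments. Unset Strict Implicit. Unset Printing Implicit Defensive.

Local Open Scope group_scope.

Definition left_action (G : groupType) (Lam : Type) (act : G -> Lam -> Lam) :=
  (forall l, act 1 l = l) /\ (forall g h l, act (g * h) l = act g (act h l)).

Definition inc (P B : Type) (I : P -> B -> Prop) (u v : P + B) : Prop :=
  match u, v with
  | inl p, inr b => I p b
  | inr b, inl p => I p b
  | _, _ => False
  end.

Definition is_chain (E : Type) (R : E -> E -> Prop) (k : nat) (u : nat -> E) :=
  forall i, 1 <= i <= k -> R (u i) (u i.-1).

(* The construction M(Gamma, phi).  phi b p is the gain of the edge bp
   (oriented from the line b to the point p); only its values on incident
   pairs matter. *)
Inductive MPoint (P B Lam : Type) : Type :=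
  | Mx of P
  | My of B & Lam.

Inductive MLine (P Lam : Type) : Type :=
  | Mz of P & Lam.

Definition Minc (P B : Type) (I : P -> B -> Prop) (G : groupType) (Lam : Type)
  (act : G -> Lam -> Lam) (phi : B -> P -> G) (x : MPoint P B Lam) (z : MLine P Lam) : Prop :=
  match x, z with
  | Mx p, Mz p' _ => p = p'
  | My b l, Mz p mu => I p b /\ mu = act (phi b p) l
  end.

Definition Minc_el (P B : Type) (I : P -> B -> Prop) (G : groupType) (Lam : Type)
  (act : G -> Lam -> Lam) (phi : B -> P -> G)
  (u v : MPoint P B Lam + MLine P Lam) : Prop :=
  match u, v with
  | inl x, inr z => Minc I act phi x z
  | inr z, inl x => Minc I act phi x z
  | _, _ => False
  end.

Definition melt (P B Lam : Type) (u : P + B) (l : Lam) : MPoint P B Lam + MLine P Lam :=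
  match u with
  | inl p => inr (Mz p l)
  | inr b => inl (My P b l)
  end.

(* phi(e)^delta for the step from u to v along the edge e joining them:
   delta = 1 if e is oriented from u to v (u a line, v a point), else -1. *)
Definition step_gain (P B : Type) (G : groupType) (phi : B -> P -> G) (u v : P + B) : G :=
  match u, v with
  | inr b, inl p => phi b p
  | inl p, inr b => (phi b p)^-1
  | _, _ => 1
  end.

Fixpoint walk_gain (P B : Type) (G : groupType) (phi : B -> P -> G) (u : nat -> P + B) (n : nat) : G :=
  match n with
  | 0 => 1
  | n'.+1 => step_gain phi (u n') (u n'.+1) * walk_gain phi u n'
  end.

(* A label lambda on m_i is forced by the incidence with m_(i-1): the edge
   u_(i-1) u_i transports lambda_(i-1) to lambda_i by its gain (or its
   inverse, according to the orientation).  Hence labels along a chain of M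
   are exactly the images of lambda_0 under the partial walk gains, and any
   chain of (P,B,I) lifts by taking lambda_i := phi_(u_0 ... u_i) . lambda_0. *)
From mathcomp Require Import all_boot.
From mathcomp Require Import monoid.

Set Implicit Arguments.
Unset Strict Implicit.
Unset Printing Implicit Defensive.

Local Open Scope group_scope.

Section GainLift.

Variables (P B : Type) (I : P -> B -> Prop) (G : groupType) (Lam : Type).
Variables (act : G -> Lam -> Lam) (phi : B -> P -> G).
Hypothesis hact : left_action act.

Let act1 : forall l, act 1 l = l. Proof. by case: hact. Qed.
Let actM : forall g h l, act (g * h) l = act g (act h l). Proof. by case: hact. Qed.

Definition labels_transported (k : nat) (u : nat -> P + B) (lam : nat -> Lam) :=
  forall i, 1 <= i <= k -> lam i = act (step_gain phi (u i.-1) (u i)) (lam i.-1).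

Lemma Minc_el_melt (a b : P + B) (la lb : Lam) :
  Minc_el I act phi (melt a la) (melt b lb) <->
  inc I a b /\ la = act (step_gain phi b a) lb.
Proof.
case: a => [p|c]; case: b => [q|d] /=; try tauto.
split=> -[Hinc Hl]; split=> //; subst.
- by rewrite -actM mulVg act1.
- by rewrite -actM mulgV act1.
Qed.

Lemma is_chain_melt (k : nat) (u : nat -> P + B) (lam : nat -> Lam) :
  is_chain (Minc_el I act phi) k (fun i => melt (u i) (lam i)) <->
  is_chain (inc I) k u /\
  labels_transported k u lam.
Proof.
split=> [Hc | [Hc Hlam] i Hi].
  by split=> i Hi; case/Minc_el_melt: (Hc i Hi).
by apply/Minc_el_melt; split; [exact: Hc | exact: Hlam].
Qed.

Lemma labels_walk_gain (k : nat) (u : nat -> P + B) (lam : nat -> Lam) :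
  labels_transported k u lam ->
  forall n, n <= k -> lam n = act (walk_gain phi u n) (lam 0).
Proof.
move=> Hlam; elim=> [|n IH] Hn /=; first by rewrite act1.
by rewrite actM -IH ?(ltnW Hn) // Hlam.
Qed.

Lemma is_chain_lift (k : nat) (u : nat -> P + B) (l0 : Lam) :
  is_chain (inc I) k u ->
  is_chain (Minc_el I act phi) k (fun i => melt (u i) (act (walk_gain phi u i) l0)).
Proof.
move=> Hc; apply/is_chain_melt; split=> // -[|i] // _; exact: actM.
Qed.

End GainLift.

Theorem proposition2 (P B : Type) (I : P -> B -> Prop)
  (hP : inhabited P) (hB : inhabited B) (hI : exists p b, I p b)
  (G : groupType) (Lam : Type) (hLam : inhabited Lam)
  (act : G -> Lam -> Lam) (hact : left_action act)
  (phi : B -> P -> G) (k : nat) (hk : 1 <= k) (u : nat -> P + B) :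
  (is_chain (inc I) k u <->
     exists lam : nat -> Lam,
       is_chain (Minc_el I act phi) k (fun i => melt (u i) (lam i)))
  /\
  (forall lam : nat -> Lam,
     is_chain (Minc_el I act phi) k (fun i => melt (u i) (lam i)) ->
     lam k = act (walk_gain phi u k) (lam 0)).
Proof.
split; first split.
- case: hLam => l0 Hc.
  by exists (fun i => act (walk_gain phi u i) l0); exact: is_chain_lift.
- by case=> lam /(is_chain_melt _ _ hact) [].
- move=> lam /(is_chain_melt _ _ hact) [_ Hlam].
  exact: (labels_walk_gain hact Hlam (leqnn k)).
Qed.
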